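(* Let $n\ge3$ and suppose $T=T_\lambda(r,m)$ acts linearly and inner faithfully on $\Bbbk\overline{Q}$ so that $g$ acts by a reflection: $g\cdot e_i=e_{n-(d+i)}$, $g\cdot a_i=\mu_ia^*_{n-(d+i+1)}$, $g\cdot a_i^*=\mu_i^*a_{n-(d+i+1)}$ for some integer $0<d\le n-1$ and $\mu_i,\mu_i^*\in\Bbbk^\times$. Let $\sigma$ be the quiver-Taft map. If $j$ is a vertex with $g\cdot j=j$ and $c_j,c_j^*\in\Bbbk$ satisfy $\sigma(a_j)=c_ja^*_{j-1}$ and $\sigma(a_j^* )=c_j^*a_j^*$, then $$c_j^2=\mu_j(\mu^*_{j-1})^{-1}\gamma_{j-1}^2,\qquad (c_j^* )^2=\mu_j^*\mu_{j-1}\gamma_{j-1}^2.$$ For every $i$ such that neither $i$ nor $i+1$ is fixed by $g$, $$\gamma_{i+1}^2=(\mu_i\mu^*_{n-(d+i+1)})\gamma_i^2=(\mu_i^*\mu_{n-(d+i+1)})^{-1}\gamma_i^2.$$ Consequently, either $\gamma_i=0$ for all $i$, or $\gamma_i\neq0$ for all $i$ with $g\cdot i\neq i$.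
   Context: Let $\Bbbk$ be a field, $r>1$ and $m$ positive integers with $r\mid m$, and $\lambda\in\Bbbk$ a primitive $r$-th root of unity, with $r$ coprime to the characteristic of $\Bbbk$. The generalized Taft algebra $T=T_\lambda(r,m)$ is the Hopf algebra generated by $g,x$ with relations $gx=\lambda xg$, $g^m=1$, $x^r=0$, $\Delta(g)=g\otimes g$, $\Delta(x)=1\otimes x+x\otimes g$, $\varepsilon(g)=1,\varepsilon(x)=0$, $S(g)=g^{-1}$, $S(x)=-xg^{-1}$. An action of $T$ on an algebra $A$ is a $T$-module algebra structure; so $g$ acts by an algebra automorphism and $x\cdot(ab)=a(x\cdot b)+(x\cdot a)(g\cdot b)$. It is inner faithful if no nonzero Hopf ideal $I$ of $T$ satisfies $I\cdot A=0$. Vertex indices are taken modulo $n$. $\overline{Q}$ has vertices $0,\dots,n-1$ and arrows $a_i:i\to i+1$, $a_i^*:i+1\to i$; in $\Bbbk\overline{Q}$, $e_i$ is the trivial path at $i$, $s(a),t(a)$ source and target, and $pq$ is concatenation ($p$ then $q$) if $t(p)=s(q)$, else $0$. A linear action: $g$ acts by a path-length-preserving automorphism ($g\cdot e_i=e_{g\cdot i}$) and $x$ maps vertices into the span of vertices and arrows into the span of vertices and arrows. Then there are scalars $\gamma_i$ with $x\cdot e_i=\gamma_ie_i-\gamma_i\lambda^{-1}e_{g\cdot i}$; the quiver-Taft map $\sigma$ is the linear map on the span of vertices and arrows with $\sigma(e_i)=0$ and $\sigma(a)=x\cdot a-\gamma_{t(a)}a+\gamma_{s(a)}\lambda^{-1}(g\cdot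 a)$ for arrows $a$. *)

From HB Require Import structures.
From mathcomp Require Import all_boot all_order all_algebra.
Set Implicit Arguments. Unset Strict Implicit. Unset Printing Implicit Defensive.
Import Order.TTheory GRing.Theory Num.Theory.
Local Open Scope ring_scope.

(* Arrow (i, false) is a_i : i -> i+1, arrow (i, true) is a_i^* :     *)
(* i+1 -> i.                                                          *)
Definition arrow (n : nat) : finType := ('Z_n * bool)%type.

Definition src n (b : arrow n) : 'Z_n := if b.2 then b.1 + 1 else b.1.
Definition tgt n (b : arrow n) : 'Z_n := if b.2 then b.1 else b.1 + 1.

Fixpoint ok_arrows n (v : 'Z_n) (s : seq (arrow n)) : bool :=
  if s is b :: s' then (src b == v) && ok_arrows (tgt b) s' else true.

Definition ok_path n (p : 'Z_n * seq (arrow n)) : bool := ok_arrows p.1 p.2.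

(* value of a path (p then q is written p * q) *)
Definition pathval (K : fieldType) (A : algType K) n (e : 'Z_n -> A)
    (arr : arrow n -> A) (p : 'Z_n * seq (arrow n)) : A :=
  e p.1 * \prod_(b <- p.2) arr b.

(* A, with trivial paths e and arrows arr, is (isomorphic to) the path
   algebra k Qbar: the standard presentation relations hold, and the
   paths form a K-basis of A. *)
Record is_path_algebra (K : fieldType) (A : algType K) n (e : 'Z_n -> A)
    (arr : arrow n -> A) : Prop := {
  pa_idem : forall i j, e i * e j = (if i == j then e i else 0);
  pa_one : \sum_(i : 'Z_n) e i = 1;
  pa_src : forall b, e (src b) * arr b = arr b;
  pa_tgt : forall b, arr b * e (tgt b) = arr b;
  pa_free : forall (s : seq ('Z_n * seq (arrow n))) (c : 'Z_n * seq (arrow n) -> K),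
      uniq s -> all (@ok_path n) s ->
      \sum_(p <- s) c p *: pathval e arr p = 0 ->
      forall p, p \in s -> c p = 0;
  pa_span : forall a : A, exists (s : seq ('Z_n * seq (arrow n)))
      (c : 'Z_n * seq (arrow n) -> K),
      all (@ok_path n) s /\ a = \sum_(p <- s) c p *: pathval e arr p }.

Definition in_span_vert (K : fieldType) (A : algType K) n (e : 'Z_n -> A) (a : A) :=
  exists c : 'Z_n -> K, a = \sum_(i : 'Z_n) c i *: e i.
Definition in_span_deg01 (K : fieldType) (A : algType K) n (e : 'Z_n -> A)
    (arr : arrow n -> A) (a : A) :=
  exists (c : 'Z_n -> K) (c' : arrow n -> K),
    a = \sum_(i : 'Z_n) c i *: e i + \sum_(b : arrow n) c' b *: arr b.

(* The generalized Taft algebra T_lam(r,m), written out on its PBW    *)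
(* basis g^i x^j (i < m, j < r): an element is its coefficient matrix *)
(* 'M_(m, r).  Relations: gx = lam xg, g^m = 1, x^r = 0, hence        *)
(* (g^i x^j)(g^k x^l) = lam^(-jk) g^(i+k mod m) x^(j+l) (0 if j+l>=r). *)
Section Taft.
Variables (K : fieldType) (lam : K) (m r : nat).
Local Notation T := 'M[K]_(m, r).

Definition tmul (y z : T) : T :=
  \matrix_(p < m, q < r) \sum_(i < m) \sum_(j < r) \sum_(k < m) \sum_(l < r)
    (if (p == ((i + k) %% m)%N :> nat) && (q == (j + l)%N :> nat)
     then y i j * z k l * lam^-1 ^+ (j * k)%N else 0).

Definition tunit : T := \matrix_(i < m, j < r) ((i == 0%N :> nat) && (j == 0%N :> nat))%:R.
Definition tg : T := \matrix_(i < m, j < r) ((i == (1 %% m)%N :> nat) && (j == 0%N :> nat))%:R.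
Definition tx : T := \matrix_(i < m, j < r) ((i == 0%N :> nat) && (j == 1%N :> nat))%:R.
Definition tpow (y : T) (k : nat) : T := iter k (tmul y) tunit.

(* T (x) T, with u (x) v represented by the outer product of coordinates *)
Definition tens (u v : T) : 'M[K]_(m * r, m * r) := (mxvec u)^T *m mxvec v.
Definition tbasis (p : 'I_(m * r)) : T := vec_mx (delta_mx 0 p).
Definition ttmul (M N : 'M[K]_(m * r, m * r)) : 'M[K]_(m * r, m * r) :=
  \sum_(p1 < m * r) \sum_(q1 < m * r) \sum_(p2 < m * r) \sum_(q2 < m * r)
    (M p1 q1 * N p2 q2) *: tens (tmul (tbasis p1) (tbasis p2)) (tmul (tbasis q1) (tbasis q2)).
Definition ttpow (M : 'M[K]_(m * r, m * r)) (k : nat) :=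
  iter k (ttmul M) (tens tunit tunit).

(* comultiplication: algebra map with Delta g = g(x)g, Delta x = 1(x)x + x(x)g *)
Definition tDelta (y : T) : 'M[K]_(m * r, m * r) :=
  \sum_(i < m) \sum_(j < r) y i j *:
     ttmul (ttpow (tens tg tg) i) (ttpow (tens tunit tx + tens tx tg) j).
Definition teps (y : T) : K := \sum_(i < m) \sum_(j < r) (j == 0%N :> nat)%:R * y i j.
(* antipode: anti-algebra map with S g = g^-1 = g^(m-1), S x = - x g^-1 *)
Definition tginv : T := tpow tg m.-1.
Definition tS (y : T) : T :=
  \sum_(i < m) \sum_(j < r) y i j *: tmul (tpow (- tmul tx tginv) j) (tpow tginv i).

Definition hopf_ideal (I : {vspace T}) : Prop :=
  [/\ forall t y, y \in I -> tmul t y \in I /\ tmul y t \in I,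
      forall y, y \in I -> exists s : seq (T * T),
          all (fun p => (p.1 \in I) || (p.2 \in I)) s /\
          tDelta y = \sum_(p <- s) tens p.1 p.2,
      forall y, y \in I -> teps y = 0
    & forall y, y \in I -> tS y \in I].

End Taft.

(* T-module-algebra structure on A: g acts by G, x acts by X. *)
Definition taft_module_algebra (K : fieldType) (A : algType K) (lam : K) (m r : nat)
    (G X : {linear A -> A}) : Prop :=
  [/\ (forall a b, G (a * b) = G a * G b) /\ G 1 = 1,
      (forall a b, X (a * b) = a * X b + X a * G b) /\ X 1 = 0,
      forall a, G (X a) = lam *: X (G a),
      forall a, iter m G a = a
    & forall a, iter r X a = 0].

Definition tact (K : fieldType) (A : algType K) (m r : nat)
    (G X : {linear A -> A}) (y : 'M[K]_(m, r)) (a : A) : A :=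
  \sum_(i < m) \sum_(j < r) y i j *: iter i G (iter j X a).

Definition inner_faithful (K : fieldType) (A : algType K) (lam : K) (m r : nat)
    (G X : {linear A -> A}) : Prop :=
  forall I : {vspace 'M[K]_(m, r)}, hopf_ideal lam I ->
    (forall y a, y \in I -> tact G X y a = 0) -> I = 0%VS.

Definition qsigma (K : fieldType) (A : algType K) n (lam : K) (G X : {linear A -> A})
    (arr : arrow n -> A) (gam : 'Z_n -> K) (b : arrow n) : A :=
  X (arr b) - gam (tgt b) *: arr b + (gam (src b) / lam) *: G (arr b).

(* Comparing [G (X e_k) = lam X (G e_k)] at the vertex [e_k] gives
   gam (g.k) = gam k / lam.  As g is an involution on vertices, (lam + 1) gam k = 0:
   hence gam (g.k) = - gam k, gam vanishes at fixed vertices, and a nonzero gam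
   forces lam = -1, r = 2 and X^2 = 0.
   At a fixed vertex j, sigma and the commutation relation show that X preserves
   the span of a_j and a*_(j-1) (resp. a*_j and a_(j-1)), and (lam + 1) gam = 0
   makes X^2 act there by a scalar; nilpotency of X kills that scalar, which is the
   formula for c_j^2 (resp. (c*_j)^2).
   For an arrow a from s to t between non-fixed vertices, X a is, up to a multiple of
   e_s, gam_t a + gam_s (g.a); sandwiching X^2 a = 0 between e_s and e_t gives
   gam_t^2 = nu gam_s^2, where g^2.a = nu a.  Two adjacent vertices are never both
   fixed (n >= 3), so nonvanishing of gam propagates around the cycle, crossing a
   fixed vertex i + 1 through gam (i + 2) = gam (g.i) = - gam i. *)

From HB Require Import structures.
From mathcomp Require Import all_boot all_order all_algebra ring.
Set Implicit Arguments.
Unset Strict Implicit.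
Unset Printing Implicit Defensive.
Import GRing.Theory.
Local Open Scope ring_scope.

Lemma scalerIf (K : fieldType) (V : lmodType K) (v : V) :
  v != 0 -> injective ( *:%R^~ v : K -> V).
Proof.
move=> nz_v a b /eqP; rewrite -subr_eq0 -scalerBl scaler_eq0 (negbTE nz_v) orbF.
by rewrite subr_eq0 => /eqP.
Qed.

Lemma prim_root_neq0 (K : idomainType) (r : nat) (z : K) :
  r.-primitive_root z -> z != 0.
Proof. by move=> prim_z; rewrite (prim_root_eq0 prim_z) -lt0n (prim_order_gt0 prim_z). Qed.

Lemma prim_root_neq1 (K : idomainType) (r : nat) (z : K) :
  (1 < r)%N -> r.-primitive_root z -> z != 1.
Proof.
move=> r_gt1 prim_z; apply: contraTneq r_gt1 => z1.
by have := prim_order_dvd prim_z 1; rewrite z1 expr1n eqxx dvdn1 => /eqP ->.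
Qed.

Lemma Zp_two_neq0 (n : nat) : (2 < n)%N -> (2%:R : 'Z_n) != 0.
Proof.
move=> n_gt2; have n_gt1 := ltnW n_gt2.
by apply/eqP => /(congr1 val) /=; rewrite Zp_cast // (modn_small n_gt1) modn_small.
Qed.

Section NilpotentOperator.
Variables (K : fieldType) (V : lmodType K) (X : {linear V -> V}) (r : nat).
Hypothesis X_nil : forall v, iter r X v = 0.

Lemma nilpotent_sqr_eigen_eq0 u q : u != 0 -> X (X u) = q *: u -> q = 0.
Proof.
move=> nz_u XXu.
have iter_double k : iter k.*2 X u = q ^+ k *: u.
  elim: k => [|k IHk]; first by rewrite scale1r.
  by rewrite doubleS !iterS IHk !linearZ /= XXu scalerA exprSr.
have /esym/eqP := iter_double r; rewrite -addnn iterD X_nil.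
by rewrite scaler_eq0 (negbTE nz_u) orbF expf_eq0 => /andP [_ /eqP].
Qed.

Lemma nilpotent_block_eq0 u v a b c d :
  u != 0 -> X u = a *: u + b *: v -> X v = c *: u + d *: v ->
  b * (a + d) = 0 -> a ^+ 2 + b * c = 0.
Proof.
move=> nz_u Xu Xv trace0; apply: (nilpotent_sqr_eigen_eq0 nz_u).
rewrite Xu linearD !linearZ /= Xu Xv !scalerDr !scalerA addrACA -!scalerDl.
by rewrite [a * b]mulrC -mulrDr trace0 scale0r addr0 expr2.
Qed.

End NilpotentOperator.

Lemma arrow_tgt_src (n : nat) (b : arrow n) : tgt b = src b + 1 \/ tgt b = src b - 1.
Proof. by case: b => k []; rewrite /src /tgt /= ?addrK; [right | left]. Qed.

Lemma src_neq_tgt (n : nat) (b : arrow n) : src b != tgt b.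
Proof.
case: (arrow_tgt_src b) => ->.
  by rewrite -{1}[src b]addr0 (inj_eq (addrI _)) eq_sym oner_eq0.
by rewrite -{1}[src b]addr0 (inj_eq (addrI _)) eq_sym oppr_eq0 oner_eq0.
Qed.

Section PathAlgebra.
Variables (K : fieldType) (A : algType K) (n : nat).
Variables (e : 'Z_n -> A) (arr : arrow n -> A).
Hypothesis hA : is_path_algebra e arr.

Lemma vertex_idem i : e i * e i = e i.
Proof. by rewrite (pa_idem hA) eqxx. Qed.

Lemma vertex_orth i j : i != j -> e i * e j = 0.
Proof. by rewrite (pa_idem hA) => /negbTE ->. Qed.

Lemma vertex_arrow_eq0 x b : x != src b -> e x * arr b = 0.
Proof. by move=> xb; rewrite -(pa_src hA b) mulrA vertex_orth // mul0r. Qed.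

Lemma arrow_vertex_eq0 b y : y != tgt b -> arr b * e y = 0.
Proof. by move=> yb; rewrite -(pa_tgt hA b) -mulrA vertex_orth 1?eq_sym // mulr0. Qed.

Lemma pathval_neq0 p : ok_path p -> pathval e arr p != 0.
Proof.
move=> ok_p; apply/eqP => p0.
have := pa_free hA (c := fun _ => 1) (erefl : uniq [:: p]).
rewrite /= ok_p big_seq1 scale1r p0 => /(_ erefl erefl p).
by rewrite mem_seq1 eqxx => /(_ erefl) /eqP; rewrite oner_eq0.
Qed.

Lemma vertex_neq0 i : e i != 0.
Proof. by have := @pathval_neq0 (i, [::]) erefl; rewrite /pathval big_nil mulr1. Qed.

Lemma arrow_neq0 b : arr b != 0.
Proof.
have := @pathval_neq0 (src b, [:: b]); rewrite /pathval /ok_path /= eqxx big_seq1.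
by rewrite (pa_src hA); apply.
Qed.

(* The hypotheses say that no arrow goes from [s] to [t] (see [arrow_tgt_src]). *)
Lemma vertex_sandwich s t a : in_span_deg01 e arr a -> t != s + 1 -> t != s - 1 ->
  exists al, e s * a * e t = al *: e s.
Proof.
move=> [c [c' ->]] ts1 ts2.
have arrows0 : e s * (\sum_b c' b *: arr b) * e t = 0.
  rewrite mulr_sumr mulr_suml big1 // => b _; rewrite -scalerAr -scalerAl.
  have [sb|sb] := eqVneq (src b) s; last by rewrite vertex_arrow_eq0 1?eq_sym // mul0r scaler0.
  rewrite -mulrA arrow_vertex_eq0 ?mulr0 ?scaler0 //.
  by case: (arrow_tgt_src b) => ->; rewrite sb.
rewrite mulrDr mulrDl arrows0 addr0 mulr_sumr (bigD1 s) //= big1 ?addr0 => [|i si]; last first.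
  by rewrite -scalerAr vertex_orth 1?eq_sym // scaler0.
rewrite -scalerAr vertex_idem -scalerAl (pa_idem hA).
by case: eqP => _; [exists (c s) | exists 0; rewrite scale0r scaler0].
Qed.

End PathAlgebra.

Section ReflectionAction.
Variables (K : fieldType) (A : algType K) (n : nat).
Variables (e : 'Z_n -> A) (arr : arrow n -> A).
Variables (lam : K) (G X : {linear A -> A}) (d : nat) (gam : 'Z_n -> K).
Hypothesis hA : is_path_algebra e arr.
Hypotheses (lam_neq0 : lam != 0) (lam_neq1 : lam != 1).
Hypothesis G_mul : forall a b, G (a * b) = G a * G b.
Hypothesis X_mul : forall a b, X (a * b) = a * X b + X a * G b.
Hypothesis GX : forall a, G (X a) = lam *: X (G a).

(* [mirror i] is the vertex [g . i]. *)
Local Notation mirror i := (- (d%:R + i)).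
Hypothesis hGe : forall i, G (e i) = e (mirror i).
Hypothesis hgam : forall i, X (e i) = gam i *: e i - (gam i / lam) *: e (mirror i).

Lemma mirrorK (i : 'Z_n) : mirror (mirror i) = i.
Proof. by rewrite opprD opprK addKr. Qed.

Lemma mirrorD1 (i : 'Z_n) : mirror (i + 1) = mirror i - 1.
Proof. by rewrite addrA opprD. Qed.

Lemma mirrorB1 (i : 'Z_n) : mirror (i - 1) = mirror i + 1.
Proof. by rewrite addrA opprD opprK. Qed.

Lemma gam_fixed k : mirror k = k -> gam k = 0.
Proof.
move=> fix_k.
have Xek : X (e k) = (gam k * (1 - lam^-1)) *: e k.
  by rewrite hgam fix_k mulrBr mulr1 scalerBl.
have : X (e k) + X (e k) = X (e k) + 0.
  rewrite addr0 -{3}(vertex_idem hA k) X_mul hGe fix_k Xek.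
  by rewrite -scalerAr -scalerAl (vertex_idem hA).
move/addrI/eqP; rewrite Xek scaler_eq0 (negbTE (vertex_neq0 hA k)) orbF mulf_eq0.
by rewrite subr_eq0 [1 == _]eq_sym invr_eq1 (negbTE lam_neq1) orbF => /eqP.
Qed.

Lemma gam_mirror k : gam (mirror k) = gam k / lam.
Proof.
have [fix_k|nfix_k] := eqVneq (mirror k) k; first by rewrite fix_k gam_fixed // mul0r.
have := congr1 (fun a => e k * a) (GX (e k)).
rewrite /= hgam linearB !linearZ /= !hGe hgam !mirrorK scalerN -scalerAr !mulrBr.
rewrite -!scalerAr (vertex_idem hA) (vertex_orth hA) 1?eq_sym // !scaler0 !sub0r !scalerN.
move/oppr_inj; rewrite scalerA => /(scalerIf (vertex_neq0 hA k)) ->.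
by rewrite mulrCA mulfV // mulr1.
Qed.

Lemma mul_lam_gam k : lam * gam k = - gam k.
Proof.
have gam_k : gam k = gam k / lam / lam by rewrite -!gam_mirror mirrorK.
have : (lam + 1) * gam k * (lam - 1) = 0.
  have -> : (lam + 1) * gam k * (lam - 1) = (gam k - gam k / lam / lam) * lam ^+ 2.
    by field.
  by rewrite -gam_k subrr mul0r.
move/eqP; rewrite mulf_eq0 subr_eq0 (negbTE lam_neq1) orbF mulrDl mul1r addr_eq0.
by move/eqP.
Qed.

Lemma gam_mirrorN k : gam (mirror k) = - gam k.
Proof.
apply: (mulfI lam_neq0); rewrite gam_mirror mulrCA mulfV // mulr1.
by rewrite mulrN mul_lam_gam opprK.
Qed.

Lemma gam_divlam k : gam k / lam = - gam k.
Proof. by rewrite -gam_mirror gam_mirrorN. Qed.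

Lemma X_of_G_image u v mu :
  mu != 0 -> G u = mu *: v -> X v = (lam * mu)^-1 *: G (X u).
Proof.
move=> mu_neq0 Gu; rewrite GX Gu [X (_ *: _)]linearZ /= [lam *: _]scalerA.
by rewrite scalerK // mulf_neq0.
Qed.

Variables (mu mus : 'Z_n -> K) (r : nat).
Hypotheses (hmu : forall i, mu i != 0) (hmus : forall i, mus i != 0).
Hypothesis hGa : forall i, G (arr (i, false)) = mu i *: arr (- (d%:R + i + 1), true).
Hypothesis hGas : forall i, G (arr (i, true)) = mus i *: arr (- (d%:R + i + 1), false).
Hypothesis X_nil : forall a, iter r X a = 0.

Lemma mirror_succ (i : 'Z_n) : - (d%:R + i + 1) = mirror i - 1.
Proof. by rewrite -addrA mirrorD1. Qed.

Lemma fixed_vertex_arrow j c : mirror j = j ->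
  qsigma lam G X arr gam (j, false) = c *: arr (j - 1, true) ->
  c ^+ 2 = mu j / mus (j - 1) * gam (j - 1) ^+ 2.
Proof.
move=> fix_j hc.
have Ga : G (arr (j, false)) = mu j *: arr (j - 1, true) by rewrite hGa mirror_succ fix_j.
have Gb : G (arr (j - 1, true)) = mus (j - 1) *: arr (j, false).
  by rewrite hGas mirror_succ mirrorB1 fix_j addrK.
have gam_j1 : gam (j + 1) = - gam (j - 1) by rewrite -gam_mirrorN mirrorB1 fix_j.
have Xu : X (arr (j, false)) = gam (j + 1) *: arr (j, false) + c *: arr (j - 1, true).
  move: hc; rewrite /qsigma /src /tgt /= (gam_fixed fix_j) mul0r scale0r addr0 => /eqP.
  by rewrite subr_eq addrC => /eqP.
have Xv : X (arr (j - 1, true)) = (c * mus (j - 1) / (lam * mu j)) *: arr (j, false)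
                                  + (gam (j + 1) / lam) *: arr (j - 1, true).
  rewrite (X_of_G_image (hmu j) Ga) Xu linearD !linearZ /= Ga Gb.
  rewrite !scalerA addrC scalerDr !scalerA.
  by congr (_ *: _ + _ *: _); field; rewrite hmu lam_neq0.
have := nilpotent_block_eq0 X_nil (arrow_neq0 hA _) Xu Xv.
rewrite gam_divlam subrr mulr0 => /(_ erefl) /eqP; rewrite addrC addr_eq0 => /eqP c2.
transitivity (c * (c * mus (j - 1) / (lam * mu j)) * (lam * mu j / mus (j - 1))).
  by field; rewrite hmu hmus lam_neq0.
rewrite c2 gam_j1 sqrrN.
transitivity (- (lam * gam (j - 1)) * gam (j - 1) * (mu j / mus (j - 1))).
  by field; rewrite hmus.
by rewrite mul_lam_gam opprK -expr2 mulrC.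
Qed.

Lemma fixed_vertex_coarrow j c : mirror j = j ->
  qsigma lam G X arr gam (j, true) = c *: arr (j, true) ->
  c ^+ 2 = mus j * mu (j - 1) * gam (j - 1) ^+ 2.
Proof.
move=> fix_j hc.
have Ga : G (arr (j, true)) = mus j *: arr (j - 1, false) by rewrite hGas mirror_succ fix_j.
have Gb : G (arr (j - 1, false)) = mu (j - 1) *: arr (j, true).
  by rewrite hGa mirror_succ mirrorB1 fix_j addrK.
have gam_j1 : gam (j + 1) = - gam (j - 1) by rewrite -gam_mirrorN mirrorB1 fix_j.
have Xu : X (arr (j, true)) = c *: arr (j, true) + (gam (j + 1) * mus j) *: arr (j - 1, false).
  move: hc; rewrite /qsigma /src /tgt /= (gam_fixed fix_j) scale0r subr0 Ga.
  by rewrite gam_divlam scalerA mulNr scaleNr => /eqP; rewrite subr_eq => /eqP.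
have Xv : X (arr (j - 1, false)) = (gam (j + 1) * mu (j - 1) / lam) *: arr (j, true)
                                   + (c / lam) *: arr (j - 1, false).
  rewrite (X_of_G_image (hmus j) Ga) Xu linearD !linearZ /= Ga Gb.
  rewrite !scalerA scalerDr !scalerA addrC.
  by congr (_ *: _ + _ *: _); field; rewrite hmus lam_neq0.
have trace0 : gam (j + 1) * mus j * (c + c / lam) = 0.
  transitivity ((gam (j + 1) + gam (j + 1) / lam) * (mus j * c)); first by field.
  by rewrite gam_divlam subrr mul0r.
have := nilpotent_block_eq0 X_nil (arrow_neq0 hA _) Xu Xv trace0.
move/eqP; rewrite addr_eq0 => /eqP ->.
transitivity (- (gam (j + 1) * (gam (j + 1) / lam)) * (mus j * mu (j - 1))).
  by field.
by rewrite gam_divlam mulrN opprK gam_j1 mulrNN -expr2 mulrC.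
Qed.

Hypothesis hXa : forall b, in_span_deg01 e arr (X (arr b)).

Lemma G_arrow_src b : e (mirror (src b)) * G (arr b) = G (arr b).
Proof. by rewrite -hGe -G_mul (pa_src hA). Qed.

Lemma G_arrow_tgt b : G (arr b) * e (mirror (tgt b)) = G (arr b).
Proof. by rewrite -hGe -G_mul (pa_tgt hA). Qed.

Lemma src_G_arrow_eq0 b : mirror (src b) != src b -> e (src b) * G (arr b) = 0.
Proof. by move=> nfix_s; rewrite -G_arrow_src mulrA (vertex_orth hA) 1?eq_sym ?mul0r. Qed.

Lemma X_arrow_decomp b :
  mirror (src b) != src b -> mirror (tgt b) != tgt b ->
  mirror (tgt b) != src b + 1 -> mirror (tgt b) != src b - 1 ->
  exists al, X (arr b) = al *: e (src b) + gam (tgt b) *: arr b + gam (src b) *: G (arr b).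
Proof.
move=> nfix_s nfix_t t_s1 t_s2.
have X_right : X (arr b) = gam (tgt b) *: arr b + X (arr b) * e (mirror (tgt b)).
  rewrite -{1}(pa_tgt hA b) X_mul hgam hGe mulrBr -!scalerAr (pa_tgt hA).
  by rewrite (arrow_vertex_eq0 hA nfix_t) scaler0 subr0.
have X_left : X (arr b) = e (src b) * X (arr b) + gam (src b) *: G (arr b).
  rewrite -{1}(pa_src hA b) X_mul hgam mulrBl -!scalerAl src_G_arrow_eq0 // G_arrow_src.
  by rewrite scaler0 sub0r gam_divlam scaleNr opprK.
have [al hal] := vertex_sandwich hA (hXa b) t_s1 t_s2.
exists al; rewrite {1}X_right {1}X_left mulrDl -scalerAl.
by rewrite G_arrow_tgt hal addrCA addrA.
Qed.

Lemma arrow_gam_sqr (X2 : forall a, X (X a) = 0) b nu :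
  mirror (src b) != src b -> mirror (tgt b) != tgt b ->
  mirror (tgt b) != src b + 1 -> mirror (tgt b) != src b - 1 ->
  G (G (arr b)) = nu *: arr b -> gam (tgt b) ^+ 2 = nu * gam (src b) ^+ 2.
Proof.
move=> nfix_s nfix_t t_s1 t_s2 GGb.
have [al Xb] := X_arrow_decomp nfix_s nfix_t t_s1 t_s2.
have XGb : X (G (arr b)) = lam^-1 *: G (X (arr b)) by rewrite GX scalerA mulVf // scale1r.
have proj_e i : e (src b) * e i * e (tgt b) = 0.
  have [->|si] := eqVneq i (src b); last by rewrite (vertex_orth hA) 1?eq_sym // mul0r.
  by rewrite (vertex_idem hA) (vertex_orth hA) // src_neq_tgt.
have proj_arr : e (src b) * arr b * e (tgt b) = arr b by rewrite (pa_src hA) (pa_tgt hA).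
have proj_G : e (src b) * G (arr b) * e (tgt b) = 0 by rewrite src_G_arrow_eq0 // mul0r.
(* Only the [arr b] components of [X (X (arr b))] survive the sandwich. *)
have := congr1 (fun a => e (src b) * a * e (tgt b)) (X2 (arr b)).
rewrite /= mulr0 mul0r Xb !linearD !linearZ /= XGb Xb !linearD !linearZ /= GGb hGe hgam.
rewrite !(scalerDr, scalerN, mulrDr, mulrN, mulrDl, mulNr) -!scalerAr -!scalerAl.
rewrite !proj_e proj_arr !proj_G !scaler0 !(oppr0, add0r, addr0) !scalerA -scalerDl.
move/eqP; rewrite scaler_eq0 (negbTE (arrow_neq0 hA b)) orbF addr_eq0 expr2 => /eqP ->.
by rewrite [lam^-1 * _]mulrC gam_divlam !mulNr opprK mulrC expr2.
Qed.

Lemma mirror_succK (i : 'Z_n) : - (d%:R + - (d%:R + i + 1) + 1) = i.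
Proof. by rewrite !mirror_succ mirrorB1 mirrorK addrK. Qed.

Lemma gam_succ_sqr (X2 : forall a, X (X a) = 0) i :
  mirror i != i -> mirror (i + 1) != i + 1 ->
  gam (i + 1) ^+ 2 = mu i * mus (- (d%:R + i + 1)) * gam i ^+ 2 /\
  gam (i + 1) ^+ 2 = (mus i * mu (- (d%:R + i + 1)))^-1 * gam i ^+ 2.
Proof.
move=> nfix_i nfix_i1.
have i1_i : mirror (i + 1) != i - 1 by rewrite mirrorD1 (inj_eq (addIr _)).
have i_i2 : mirror i != i + 1 + 1.
  by apply: contra nfix_i1 => /eqP i_i2; rewrite mirrorD1 i_i2 addrK.
split.
  apply: (arrow_gam_sqr X2 (b := (i, false))); rewrite /src /tgt //=.
  by rewrite hGa linearZ /= hGas scalerA mirror_succK.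
have sqr_i : gam i ^+ 2 = mus i * mu (- (d%:R + i + 1)) * gam (i + 1) ^+ 2.
  apply: (arrow_gam_sqr X2 (b := (i, true))); rewrite /src /tgt ?addrK //=.
  by rewrite hGas linearZ /= hGa scalerA mirror_succK.
by rewrite sqr_i mulrA mulVf ?mul1r // mulf_neq0.
Qed.

Hypotheses (r_gt1 : (1 < r)%N) (lam_prim : r.-primitive_root lam).

Lemma sqrX_eq0 k : gam k != 0 -> forall a, X (X a) = 0.
Proof.
move=> gk a.
have lamN1 : lam = -1 by apply: (mulIf gk); rewrite mul_lam_gam mulN1r.
have r2 : r = 2%N.
  apply/eqP; rewrite eqn_leq r_gt1 andbT dvdn_leq //.
  by rewrite (prim_order_dvd lam_prim) lamN1 sqrrN expr1n.
by have := X_nil a; rewrite r2.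
Qed.

Lemma mirror_fixed_succ (two_neq0 : (2%:R : 'Z_n) != 0) (i : 'Z_n) :
  mirror i = i -> mirror (i + 1) != i + 1.
Proof.
move=> fix_i; rewrite mirrorD1 fix_i; apply: contra two_neq0 => /eqP i1.
by apply/eqP; transitivity ((i + 1) - (i - 1)); [ring | rewrite i1 subrr].
Qed.

Lemma gam_nonfixed_neq0 (two_neq0 : (2%:R : 'Z_n) != 0) k :
  gam k != 0 -> forall i, mirror i != i -> gam i != 0.
Proof.
move=> gk.
have step i : mirror i != i -> mirror (i + 1) != i + 1 -> gam i != 0 -> gam (i + 1) != 0.
  move=> nfix_i nfix_i1 gi; have [sqr_i1 _] := gam_succ_sqr (sqrX_eq0 gk) nfix_i nfix_i1.
  by rewrite -sqrf_eq0 sqr_i1 !mulf_neq0 ?expf_neq0.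
pose good i := (mirror i == i) || (gam i != 0).
have good_step i : good i -> good (i + 1) -> good (i + 1 + 1).
  rewrite /good; have [//|nfix_i2 /=] := eqVneq (mirror (i + 1 + 1)) (i + 1 + 1).
  have [fix_i1|nfix_i1] := eqVneq (mirror (i + 1)) (i + 1); last first.
    by move=> _ /=; apply: step.
  have nfix_i : mirror i != i.
    by apply/negP => /eqP /(mirror_fixed_succ two_neq0); rewrite fix_i1 eqxx.
  rewrite (negbTE nfix_i) /= => gi _.
  have -> : i + 1 + 1 = mirror i by rewrite -fix_i1 mirrorD1 subrK.
  by rewrite gam_mirrorN oppr_eq0.
have good_from j : good (k + j%:R) && good (k + j%:R + 1).
  elim: j => [|j /andP [gj gj1]].
    have nfix_k : mirror k != k by apply: contraNneq gk => /gam_fixed ->.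
    rewrite mulr0n addr0 /good gk orbT /=.
    by have [//|nfix_k1 /=] := eqVneq (mirror (k + 1)) (k + 1); apply: step.
  by rewrite -natr1 addrA gj1 /=; apply: good_step.
move=> i nfix_i; have := good_from (val (i - k)).
by rewrite natr_Zp [k + _]addrC subrK /good (negbTE nfix_i) => /andP [].
Qed.

End ReflectionAction.

Theorem lemma3p12
  (K : fieldType) (r m : nat) (lam : K)
  (hr : (1 < r)%N) (hrm : (r %| m)%N) (hlam : r.-primitive_root lam)
  (hchar : (r%:R : K) != 0)
  (n : nat) (hn : (3 <= n)%N)
  (A : algType K) (e : 'Z_n -> A) (arr : arrow n -> A)
  (hA : is_path_algebra e arr)
  (G X : {linear A -> A})
  (hact : taft_module_algebra lam m r G X)
  (hif : inner_faithful lam m r G X)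
  (d : nat) (hd0 : (0 < d)%N) (hd1 : (d <= n - 1)%N)
  (mu mus : 'Z_n -> K) (hmu : forall i, mu i != 0) (hmus : forall i, mus i != 0)
  (hGe : forall i, G (e i) = e (- (d%:R + i)))
  (hGa : forall i, G (arr (i, false)) = mu i *: arr (- (d%:R + i + 1), true))
  (hGas : forall i, G (arr (i, true)) = mus i *: arr (- (d%:R + i + 1), false))
  (hXe : forall i, in_span_vert e (X (e i)))
  (hXa : forall b, in_span_deg01 e arr (X (arr b)))
  (gam : 'Z_n -> K)
  (hgam : forall i, X (e i) = gam i *: e i - (gam i / lam) *: e (- (d%:R + i))) :
  (forall j : 'Z_n, - (d%:R + j) = j ->
     forall c cs : K,
       qsigma lam G X arr gam (j, false) = c *: arr (j - 1, true) ->
       qsigma lam G X arr gam (j, true) = cs *: arr (j, true) ->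
       c ^+ 2 = mu j / mus (j - 1) * gam (j - 1) ^+ 2 /\
       cs ^+ 2 = mus j * mu (j - 1) * gam (j - 1) ^+ 2)
  /\
  (forall i : 'Z_n, - (d%:R + i) != i -> - (d%:R + (i + 1)) != i + 1 ->
     gam (i + 1) ^+ 2 = mu i * mus (- (d%:R + i + 1)) * gam i ^+ 2 /\
     gam (i + 1) ^+ 2 = (mus i * mu (- (d%:R + i + 1)))^-1 * gam i ^+ 2)
  /\
  ((forall i, gam i = 0) \/ (forall i, - (d%:R + i) != i -> gam i != 0)).
Proof.
case: hact => [[G_mul _] [X_mul _] GX _ X_nil].
have lam_neq0 := prim_root_neq0 hlam.
have lam_neq1 := prim_root_neq1 hr hlam.
split.
  move=> j fix_j c cs hc hcs; split.
    exact: (fixed_vertex_arrow hA lam_neq0 lam_neq1 X_mul GX hGe hgam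
                               hmu hmus hGa hGas X_nil fix_j hc).
  exact: (fixed_vertex_coarrow hA lam_neq0 lam_neq1 X_mul GX hGe hgam
                               hmus hGa hGas X_nil fix_j hcs).
have [gam0|[k gk]] : (forall i, gam i = 0) \/ exists k, gam k != 0.
  have [/forallP gam0|/forallPn [k gk]] := boolP [forall i, gam i == 0].
    by left=> i; apply/eqP.
  by right; exists k.
  by split=> [i _ _|]; [rewrite !gam0 expr0n /= !mulr0 | left].
have X2 := sqrX_eq0 hA lam_neq0 lam_neq1 X_mul GX hGe hgam X_nil hr hlam gk.
split; first exact: (gam_succ_sqr hA lam_neq0 lam_neq1 G_mul X_mul GX hGe hgam
                                  hmu hmus hGa hGas hXa X2).
right; exact: (gam_nonfixed_neq0 hA lam_neq0 lam_neq1 G_mul X_mul GX hGe hgam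
                                 hmu hmus hGa hGas X_nil hXa hr hlam (Zp_two_neq0 hn) gk).
Qed.
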